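(* Let $G$ be a finite cavity-monotone network and $t>0$. Then the cavity equation $\mathbf x=t\Gamma_G(\mathbf x)$ admits a unique solution $\mathbf x(t)\in[0,\infty)^{\vec E}$, and it is globally attractive: for every initial configuration $\mathbf x^0\in[0,\infty)^{\vec E}$, the iterates $(t\Gamma_G)^k(\mathbf x^0)$ converge to $\mathbf x(t)$ as $k\to\infty$.
   Context: Measures over subsets: for a finite set $E$, a measure is $\mu:2^E\to[0,\infty)$; $Z(\mathbf w)=\sum_{F\subseteq E}\mu(F)\mathbf w^F$, $\mathbf w^F=\prod_{e\in F}w_e$; the cavity ratio is $\Gamma^e_\mu(\mathbf w')=Z^{/e}(\mathbf w')/Z^{\setminus e}(\mathbf w')$ where $Z^{\setminus e}(\mathbf w')=\sum_{F\not\ni e}\mu(F)\mathbf w'^F$, $Z^{/e}(\mathbf w')=\sum_{F\not\ni e}\mu(F\cup\{e\})\mathbf w'^F$; for $\mathbf w\in[0,\infty)^E$ with $Z(\mathbf w)>0$, $\mathbb P^{\mathbf w}_\mu(\mathcal F=F)=\mu(F)\mathbf w^F/Z(\mathbf w)$ and $U_\mu(\mathbf w)=\mathbb E^{\mathbf w}_\mu|\mathcal F|$. $\mu$ is Rayleigh if for all $\mathbf w\in(0,\infty)^E$, $e\neq f$: $\mathbb P^{\mathbf w}_\mu(e,f\in\mathcal F)\le\mathbb P^{\mathbf w}_\mu(e\in\mathcal F)\mathbb P^{\mathbf w}_\mu(f\in\mathcal F)$; size-increasing if for all $\mathbf w\in(0,\infty)^E$, $e\in E$: $\mathbb E^{\mathbf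 w}_\mu[|\mathcal F|\mathbf 1_{e\in\mathcal F}]>\mathbb E^{\mathbf w}_\mu|\mathcal F|\,\mathbb P^{\mathbf w}_\mu(e\in\mathcal F)$; cavity-monotone if $\mu(\emptyset)>0$, Rayleigh and size-increasing. Networks: a network is a simple locally finite graph $G=(V,E)$ with, for each $i\in V$, a local measure $\mu_i$ over the subsets of $E_i$ (edges incident to $i$); it is cavity-monotone if every $\mu_i$ is. $\partial i$ is the set of neighbours of $i$. A configuration is $\mathbf x=(x_{i\to j})\in[0,\infty)^{\vec E}$ indexed by oriented edges. The cavity operator is $\Gamma_G(\mathbf x)=\mathbf y$ with $y_{i\to j}=\Gamma^{ij}_{\mu_i}(x_{k\to i}:k\in\partial i\setminus\{j\})$ (the variable of $\mu_i$ attached to edge $ik$ being set to $x_{k\to i}$). The cavity equation at activity $t>0$ is $\mathbf x=t\Gamma_G(\mathbf x)$. *)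

From Stdlib Require Import Reals.
From mathcomp Require Import all_boot.

Set Implicit Arguments.
Unset Strict Implicit.
Unset Printing Implicit Defensive.

Open Scope R_scope.

Section Measures.
Variable T : finType.

(* A measure over the subsets of the ground set E : {set T} is a function
   mu : {set T} -> R; only its values on subsets of E matter. *)
Definition is_measure (E : {set T}) (mu : {set T} -> R) : Prop :=
  forall F : {set T}, F \subset E -> 0 <= mu F.

Definition wpow (w : T -> R) (F : {set T}) : R := \big[Rmult/R1]_(e in F) w e.

Definition Zpart (E : {set T}) (mu : {set T} -> R) (w : T -> R) : R :=
  \big[Rplus/R0]_(F in powerset E) (mu F * wpow w F).

Definition Zcont (E : {set T}) (mu : {set T} -> R) (w : T -> R) (S : {set T}) : R :=
  \big[Rplus/R0]_(F in powerset E | S \subset F) (mu F * wpow w F).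

Definition Prob (E : {set T}) (mu : {set T} -> R) (w : T -> R) (S : {set T}) : R :=
  Zcont E mu w S / Zpart E mu w.

Definition Usize (E : {set T}) (mu : {set T} -> R) (w : T -> R) : R :=
  (\big[Rplus/R0]_(F in powerset E) (INR #|F| * mu F * wpow w F)) / Zpart E mu w.

Definition Usize_e (E : {set T}) (mu : {set T} -> R) (w : T -> R) (e : T) : R :=
  (\big[Rplus/R0]_(F in powerset E | e \in F) (INR #|F| * mu F * wpow w F))
    / Zpart E mu w.

Definition pos_weights (E : {set T}) (w : T -> R) : Prop :=
  forall e, e \in E -> 0 < w e.

Definition Rayleigh (E : {set T}) (mu : {set T} -> R) : Prop :=
  forall w, pos_weights E w ->
  forall e f, e \in E -> f \in E -> e != f ->
    Prob E mu w [set e; f] <= Prob E mu w [set e] * Prob E mu w [set f].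

Definition size_increasing (E : {set T}) (mu : {set T} -> R) : Prop :=
  forall w, pos_weights E w ->
  forall e, e \in E -> Usize_e E mu w e > Usize E mu w * Prob E mu w [set e].

Definition cavity_monotone (E : {set T}) (mu : {set T} -> R) : Prop :=
  mu set0 > 0 /\ Rayleigh E mu /\ size_increasing E mu.

Definition Zdel (E : {set T}) (mu : {set T} -> R) (e : T) (w : T -> R) : R :=
  \big[Rplus/R0]_(F in powerset E | e \notin F) (mu F * wpow w F).

Definition Zcon (E : {set T}) (mu : {set T} -> R) (e : T) (w : T -> R) : R :=
  \big[Rplus/R0]_(F in powerset E | e \notin F) (mu (e |: F) * wpow w F).

Definition cavity_ratio (E : {set T}) (mu : {set T} -> R) (e : T) (w : T -> R) : R :=
  Zcon E mu e w / Zdel E mu e w.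

End Measures.

Section Networks.
Variable V : finType.

(* A finite simple graph: symmetric irreflexive adjacency on a finite vertex
   type.  The edge set E_i incident to i is identified with the neighbourhood
   of i (edge ik <-> neighbour k). *)
Definition simple_graph (adj : rel V) : Prop :=
  (forall i j, adj i j = adj j i) /\ (forall i, ~~ adj i i).

Definition nbhd (adj : rel V) (i : V) : {set V} := [set k | adj i k].

Definition network (adj : rel V) (mu : V -> {set V} -> R) : Prop :=
  simple_graph adj /\ forall i, is_measure (nbhd adj i) (mu i).

Definition cavity_monotone_network (adj : rel V) (mu : V -> {set V} -> R) : Prop :=
  network adj mu /\ forall i, cavity_monotone (nbhd adj i) (mu i).

(* Configurations x : V -> V -> R, x i j = x_{i->j}; only values on oriented
   edges (adj i j) are meaningful. *)
Definition nonneg_config (adj : rel V) (x : V -> V -> R) : Prop :=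
  forall i j, adj i j -> 0 <= x i j.

(* cavity operator: y_{i->j} = Gamma^{ij}_{mu_i}(x_{k->i} : k in di \ {j}) *)
Definition cavity_op (adj : rel V) (mu : V -> {set V} -> R)
  (x : V -> V -> R) : V -> V -> R :=
  fun i j => cavity_ratio (nbhd adj i) (mu i) j (fun k => x k i).

Definition scaled_cavity_op (adj : rel V) (mu : V -> {set V} -> R) (t : R)
  (x : V -> V -> R) : V -> V -> R :=
  fun i j => t * cavity_op adj mu x i j.

End Networks.

From HB Require Import structures.
From Stdlib Require Import Reals Lra Lia Psatz FunctionalExtensionality ClassicalEpsilon.
From mathcomp Require Import all_boot zify.
Open Scope R_scope.
Set Implicit Arguments.
Unset Strict Implicit.
Unset Printing Implicit Defensive.

(* Expanding the partition
   functions in two coordinates e <> f, the Rayleigh property becomes the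
   inequality A D <= B C between the coefficients of Z as a polynomial in
   (w_e, w_f); it extends to nonnegative weights by approximation and makes the
   cavity ratio Gamma_e antitone in the weights.  The size-increasing property
   makes y |-> y Gamma_e(y w) strictly increasing (mean value theorem), that is
   Gamma_e(w) < lam Gamma_e(lam w) for lam > 1, and it forces mu({e}) > 0.

   Hence F = t Gamma_G is positive, continuous, antitone and
   strictly subhomogeneous.  The orbit of the zero configuration has increasing
   even and decreasing odd terms, with limits l <= u such that u = F l and
   l = F u; the largest ratio u/l cannot exceed 1 by subhomogeneity, so l = u
   is a fixed point.  Every orbit is squeezed between consecutive terms of the
   orbit of zero, hence converges to l; this also gives uniqueness. *)

Lemma Rplus_assoc_law : associative Rplus. Proof. by move=> *; ring. Qed.
Lemma Rmult_assoc_law : associative Rmult. Proof. by move=> *; ring. Qed.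

HB.instance Definition _ :=
  Monoid.isComLaw.Build R R0 Rplus Rplus_assoc_law Rplus_comm Rplus_0_l.
HB.instance Definition _ :=
  Monoid.isComLaw.Build R R1 Rmult Rmult_assoc_law Rmult_comm Rmult_1_l.
HB.instance Definition _ := Monoid.isMulLaw.Build R R0 Rmult Rmult_0_l Rmult_0_r.
HB.instance Definition _ :=
  Monoid.isAddLaw.Build R Rmult Rplus Rmult_plus_distr_r Rmult_plus_distr_l.

Lemma cv_const (c : R) : Un_cv (fun _ => c) c.
Proof. by move=> eps eps_gt0; exists 0%nat => n _; rewrite /Rdist Rminus_diag Rabs_R0. Qed.

Lemma cv_inv_succ : Un_cv (fun n => / INR n.+1) 0.
Proof.
apply: cv_infty_cv_0 => M; have [N N_gt] := INR_unbounded M.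
exists N => n Nn; apply: Rlt_le_trans N_gt _; apply: le_INR; lia.
Qed.

Lemma CV_inv (u : nat -> R) l : l <> 0 -> Un_cv u l -> Un_cv (fun n => / u n) (/ l).
Proof.
move=> l_neq0; apply: (continuity_seq (/ id)%F).
by apply: continuity_pt_inv => //; apply/derivable_continuous_pt/derivable_pt_id.
Qed.

Lemma cv_succ (a : nat -> R) l : Un_cv a l -> Un_cv (fun n => a n.+1) l.
Proof.
move=> a_cv eps eps_gt0; have [N aN] := a_cv eps eps_gt0.
by exists N => n Nn; apply: aN; lia.
Qed.

Lemma cv_of_succ (a : nat -> R) l : Un_cv (fun n => a n.+1) l -> Un_cv a l.
Proof.
move=> a_cv eps eps_gt0; have [N aN] := a_cv eps eps_gt0.
by exists N.+1 => [[|n] Nn]; [lia | apply: aN; lia].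
Qed.

Lemma cv_interleave (a : nat -> R) l :
  Un_cv (fun n => a n.*2) l -> Un_cv (fun n => a n.*2.+1) l -> Un_cv a l.
Proof.
move=> even_cv odd_cv eps eps_gt0.
have [N1 evenN] := even_cv eps eps_gt0; have [N2 oddN] := odd_cv eps eps_gt0.
exists (N1 + N2).*2 => n Nn; rewrite -(odd_double_half n).
case: (odd n) => /=; [rewrite add1n; apply: oddN | rewrite add0n; apply: evenN];
  have := odd_double_half n; case: (odd n) => /=; lia.
Qed.

Lemma cv_between (a b c : nat -> R) l : Un_cv a l -> Un_cv b l ->
  (forall n, a n <= c n <= b n \/ b n <= c n <= a n) -> Un_cv c l.
Proof.
move=> a_cv b_cv c_between eps eps_gt0.
have [N1 aN] := a_cv eps eps_gt0; have [N2 bN] := b_cv eps eps_gt0.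
exists (N1 + N2)%nat => n Nn; rewrite /Rdist.
have /Rabs_def2 [? ?] : Rabs (a n - l) < eps by apply: aN; lia.
have /Rabs_def2 [? ?] : Rabs (b n - l) < eps by apply: bN; lia.
by apply: Rabs_def1; case: (c_between n); lra.
Qed.

Lemma seq_argmax (X : eqType) (s : seq X) (f : X -> R) x0 : x0 \in s ->
  exists2 p, p \in s & forall q, q \in s -> f q <= f p.
Proof.
elim: s x0 => [//|a s IH] x0 _; case: s IH => [|b s] IH.
  by exists a => [|q]; rewrite ?mem_head // inE => /eqP ->; apply: Rle_refl.
have [p ps p_max] := IH b (mem_head b s).
case: (Rle_lt_dec (f a) (f p)) => ap.
  by exists p => [|q]; rewrite inE ?ps ?orbT // => /orP[/eqP ->|/p_max].
exists a => [|q]; first exact: mem_head.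
by rewrite inE => /orP[/eqP ->|/p_max]; lra.
Qed.

Section RealBigops.
Variable I : Type.
Implicit Types (r : seq I) (P : pred I).

Lemma sum_ge0 r P (F : I -> R) :
  (forall i, P i -> 0 <= F i) -> 0 <= \big[Rplus/R0]_(i <- r | P i) F i.
Proof. by move=> F_ge0; apply: big_ind => //; [lra | move=> x y; lra]. Qed.

Lemma sum_le r P (F G : I -> R) : (forall i, P i -> F i <= G i) ->
  \big[Rplus/R0]_(i <- r | P i) F i <= \big[Rplus/R0]_(i <- r | P i) G i.
Proof.
by move=> FG; apply: (big_ind2 (fun x y => x <= y)) => //; [lra | move=> *; lra].
Qed.

Lemma prod_ge0 r P (F : I -> R) :
  (forall i, P i -> 0 <= F i) -> 0 <= \big[Rmult/R1]_(i <- r | P i) F i.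
Proof. by move=> F_ge0; apply: big_ind => //; [lra | move=> x y; nra]. Qed.

Lemma big_cv (op : R -> R -> R) (idx : R) r P (F : nat -> I -> R) (G : I -> R) :
  (forall a b (u v : nat -> R),
     Un_cv u a -> Un_cv v b -> Un_cv (fun n => op (u n) (v n)) (op a b)) ->
  (forall i, P i -> Un_cv (fun n => F n i) (G i)) ->
  Un_cv (fun n => \big[op/idx]_(i <- r | P i) F n i) (\big[op/idx]_(i <- r | P i) G i).
Proof.
move=> op_cv F_cv; elim: r => [|a r IH].
  by rewrite big_nil; apply: (Un_cv_ext _ _ _ _ (cv_const _)) => n; rewrite big_nil.
rewrite big_cons; apply: Un_cv_ext => [n|]; first by rewrite big_cons.
by case: (boolP (P a)) => Pa /=; [exact: op_cv (F_cv a Pa) IH | exact: IH].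
Qed.

Lemma sum_cv r P (F : nat -> I -> R) (G : I -> R) :
  (forall i, P i -> Un_cv (fun n => F n i) (G i)) ->
  Un_cv (fun n => \big[Rplus/R0]_(i <- r | P i) F n i) (\big[Rplus/R0]_(i <- r | P i) G i).
Proof. by apply: big_cv => a b u v; exact: CV_plus. Qed.

Lemma prod_cv r P (F : nat -> I -> R) (G : I -> R) :
  (forall i, P i -> Un_cv (fun n => F n i) (G i)) ->
  Un_cv (fun n => \big[Rmult/R1]_(i <- r | P i) F n i) (\big[Rmult/R1]_(i <- r | P i) G i).
Proof. by apply: big_cv => a b u v; exact: CV_mult. Qed.

Lemma sum_derivable r P (f f' : I -> R -> R) x :
  (forall i, P i -> derivable_pt_lim (f i) x (f' i x)) ->
  derivable_pt_lim (fun y => \big[Rplus/R0]_(i <- r | P i) f i y) x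
                   (\big[Rplus/R0]_(i <- r | P i) f' i x).
Proof.
move=> f_der; elim: r => [|a r IH].
  rewrite big_nil; have -> : (fun y => \big[Rplus/R0]_(i <- [::] | P i) f i y) = fct_cte 0.
    by apply: functional_extensionality => y; rewrite big_nil.
  exact: derivable_pt_lim_const.
rewrite big_cons; case: (boolP (P a)) => Pa.
  have -> : (fun y => \big[Rplus/R0]_(i <- a :: r | P i) f i y) =
            (f a + (fun y => \big[Rplus/R0]_(i <- r | P i) f i y))%F.
    by apply: functional_extensionality => y; rewrite big_cons Pa.
  exact: derivable_pt_lim_plus (f_der a Pa) IH.
have -> : (fun y => \big[Rplus/R0]_(i <- a :: r | P i) f i y) =
          (fun y => \big[Rplus/R0]_(i <- r | P i) f i y).
  by apply: functional_extensionality => y; rewrite big_cons (negbTE Pa).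
exact: IH.
Qed.
End RealBigops.

Section Subsets.
Variable T : finType.
Implicit Types (E F G : {set T}) (w : T -> R).

Lemma wpow_ext w w' F : (forall k, k \in F -> w k = w' k) -> wpow w F = wpow w' F.
Proof. exact: eq_bigr. Qed.

Lemma wpow0 w : wpow w set0 = 1.
Proof. by rewrite /wpow big_set0. Qed.

Lemma wpowU1 w f G : f \notin G -> wpow w (f |: G) = w f * wpow w G.
Proof. by move=> fG; rewrite /wpow big_setU1. Qed.

Lemma wpow_ge0 w F : (forall k, k \in F -> 0 <= w k) -> 0 <= wpow w F.
Proof. exact: prod_ge0. Qed.

Lemma wpow_scale c w F : wpow (fun k => c * w k) F = c ^ #|F| * wpow w F.
Proof.
rewrite /wpow big_split /= big_const; congr Rmult.
by elim: #|F| => [|n IH] //=; rewrite IH.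
Qed.

Lemma wpow_cv (wn : nat -> T -> R) w F :
  (forall k, k \in F -> Un_cv (fun n => wn n k) (w k)) ->
  Un_cv (fun n => wpow (wn n) F) (wpow w F).
Proof. exact: prod_cv. Qed.

Lemma wpow_zero G : G != set0 -> wpow (fun _ => 0) G = 0.
Proof. by case/set0Pn => k kG; rewrite /wpow (big_setD1 k kG) /= Rmult_0_l. Qed.

Lemma sum_split E f (P : pred {set T}) (h : {set T} -> R) : f \in E ->
  (forall G, f \notin G -> P (f |: G) = P G) ->
  \big[Rplus/R0]_(F in powerset E | P F) h F =
  \big[Rplus/R0]_(G in powerset E | P G && (f \notin G)) (h G + h (f |: G)).
Proof.
move=> fE P_f.
rewrite (bigID (fun F => f \in F)) /= big_split /= Rplus_comm; congr Rplus.
  by apply: eq_bigl => F; rewrite andbA.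
rewrite (reindex_onto (fun G => f |: G) (fun F => F :\ f)) /=; last first.
  by move=> F /andP[_ fF]; rewrite setD1K.
apply: eq_bigl => G; rewrite !powersetE setU11 andbT subUset sub1set fE /=.
case fG: (f \in G) => /=.
  rewrite !andbF; apply/negbTE/negP => /andP[_ /eqP GfG].
  by move: fG; rewrite -GfG setD11.
by rewrite setU1K ?fG // eqxx !andbT P_f ?fG.
Qed.

Lemma sum_split_all E f (h : {set T} -> R) : f \in E ->
  \big[Rplus/R0]_(F in powerset E) h F =
  \big[Rplus/R0]_(G in powerset E | f \notin G) (h G + h (f |: G)).
Proof.
move=> fE; rewrite -(@sum_split E f predT) //.
by apply: eq_bigl => F; rewrite andbT.
Qed.

Lemma mem_avoiding E e G k :
  (G \in powerset E) && (e \notin G) -> k \in G -> k \in E /\ k != e.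
Proof.
move=> /andP[GE eG] kG; split; first by move: GE; rewrite powersetE => /subsetP; apply.
by apply/eqP => ke; move: eG; rewrite -ke kG.
Qed.
End Subsets.

Section Measure.
Variable T : finType.
Variables (E : {set T}) (mu : {set T} -> R).
Hypothesis mu_ge0 : is_measure E mu.
Hypothesis mu0_gt0 : 0 < mu set0.
Implicit Types (S G : {set T}) (w : T -> R).

Definition nonneg_off e f w := forall k, k \in E -> k != e -> k != f -> 0 <= w k.
Definition agree_off e f w w' := forall k, k \in E -> k != e -> k != f -> w k = w' k.

(* The partition function over subsets G of E avoiding e and f, each weighted
   by mu (S :|: G): the coefficients of Z as a polynomial in w_e and w_f. *)
Definition Zrest e f S w :=
  \big[Rplus/R0]_(G in powerset E | (e \notin G) && (f \notin G)) (mu (S :|: G) * wpow w G).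

Lemma mem_avoiding2 e f G k : (G \in powerset E) && ((e \notin G) && (f \notin G)) ->
  k \in G -> [/\ k \in E, k != e & k != f].
Proof.
move=> /andP[GE /andP[eG fG]] kG.
have [kE ke] := @mem_avoiding T E e G k (introT andP (conj GE eG)) kG.
by have [_ kf] := @mem_avoiding T E f G k (introT andP (conj GE fG)) kG.
Qed.

Lemma Zrest_ext e f S w w' : agree_off e f w w' -> Zrest e f S w = Zrest e f S w'.
Proof.
move=> ww'; apply: eq_bigr => G HG; congr Rmult; apply: wpow_ext => k kG.
by case: (mem_avoiding2 HG kG) => kE ke kf; apply: ww'.
Qed.

(* The term G = set0 alone contributes mu S. *)
Lemma Zrest_ge e f S w : S \subset E -> nonneg_off e f w -> mu S <= Zrest e f S w.
Proof.
move=> SE w_ge0; rewrite /Zrest (bigD1 set0) /=; last by rewrite powersetE sub0set !in_set0.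
rewrite wpow0 setU0 Rmult_1_r -{1}(Rplus_0_r (mu S)); apply: Rplus_le_compat_l.
apply: sum_ge0 => G /andP[HG _]; apply: Rmult_le_pos.
  by apply: mu_ge0; rewrite subUset SE; case/andP: HG; rewrite powersetE.
by apply: wpow_ge0 => k kG; case: (mem_avoiding2 HG kG) => *; apply: w_ge0.
Qed.

Lemma Zrest_ge0 e f S w : S \subset E -> nonneg_off e f w -> 0 <= Zrest e f S w.
Proof. by move=> SE w_ge0; apply: Rle_trans (Zrest_ge SE w_ge0); apply: mu_ge0. Qed.

Lemma Zrest_cv e f S (wn : nat -> T -> R) w :
  (forall k, k \in E -> Un_cv (fun n => wn n k) (w k)) ->
  Un_cv (fun n => Zrest e f S (wn n)) (Zrest e f S w).
Proof.
move=> w_cv; apply: sum_cv => G /andP[GE _]; apply: CV_mult; first exact: cv_const.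
apply: wpow_cv => k kG; apply: w_cv.
by move: GE; rewrite powersetE => /subsetP; apply.
Qed.

Lemma Zdel_Zrest e w : Zdel E mu e w = Zrest e e set0 w.
Proof. by apply: eq_big => [G|G _]; rewrite ?andbb ?set0U. Qed.

Lemma Zcon_Zrest e w : Zcon E mu e w = Zrest e e [set e] w.
Proof. by apply: eq_bigl => G; rewrite andbb. Qed.

Lemma Zdel_ge e w : nonneg_off e e w -> mu set0 <= Zdel E mu e w.
Proof. by move=> w_ge0; rewrite Zdel_Zrest; apply: Zrest_ge; rewrite ?sub0set. Qed.

Lemma Zdel_gt0 e w : nonneg_off e e w -> 0 < Zdel E mu e w.
Proof. by move=> w_ge0; apply: Rlt_le_trans (Zdel_ge w_ge0). Qed.

Lemma Zcon_ge e w : e \in E -> nonneg_off e e w -> mu [set e] <= Zcon E mu e w.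
Proof. by move=> eE w_ge0; rewrite Zcon_Zrest; apply: Zrest_ge; rewrite ?sub1set. Qed.

Lemma Zcon_ge0 e w : e \in E -> nonneg_off e e w -> 0 <= Zcon E mu e w.
Proof. by move=> eE w_ge0; rewrite Zcon_Zrest; apply: Zrest_ge0; rewrite ?sub1set. Qed.

Lemma cavity_ratio_ext e w w' : agree_off e e w w' ->
  cavity_ratio E mu e w = cavity_ratio E mu e w'.
Proof. by move=> ww'; rewrite /cavity_ratio !(Zdel_Zrest, Zcon_Zrest) !(Zrest_ext _ ww'). Qed.

Lemma cavity_ratio_cv e (wn : nat -> T -> R) w : nonneg_off e e w ->
  (forall k, k \in E -> Un_cv (fun n => wn n k) (w k)) ->
  Un_cv (fun n => cavity_ratio E mu e (wn n)) (cavity_ratio E mu e w).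
Proof.
move=> w_ge0 w_cv; apply: CV_mult.
  apply: (Un_cv_ext (fun n => Zrest e e [set e] (wn n))) => [n|]; first by rewrite Zcon_Zrest.
  by rewrite Zcon_Zrest; apply: Zrest_cv.
apply: CV_inv; first exact/Rgt_not_eq/Zdel_gt0.
apply: (Un_cv_ext (fun n => Zrest e e set0 (wn n))) => [n|]; first by rewrite Zdel_Zrest.
by rewrite Zdel_Zrest; apply: Zrest_cv.
Qed.

Lemma Zrest_split e f S w : f \in E -> f != e ->
  Zrest e e S w = Zrest e f S w + w f * Zrest e f (f |: S) w.
Proof.
move=> fE fe; rewrite /Zrest (@sum_split _ E f (fun G => (e \notin G) && (e \notin G))) //;
  last by move=> G _; rewrite in_setU1 eq_sym (negbTE fe).
rewrite big_distrr -big_split /=; apply: eq_big => [G|G /andP[_ /andP[_ fG]]].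
  by rewrite andbb andbA.
by rewrite wpowU1 // setUA (setUC S [set f]); ring.
Qed.

Lemma Zdel_split e f w : f \in E -> f != e ->
  Zdel E mu e w = Zrest e f set0 w + w f * Zrest e f [set f] w.
Proof. by move=> fE fe; rewrite Zdel_Zrest (Zrest_split _ _ fE fe) setU0. Qed.

Lemma Zcon_split e f w : f \in E -> f != e ->
  Zcon E mu e w = Zrest e f [set e] w + w f * Zrest e f [set e; f] w.
Proof. by move=> fE fe; rewrite Zcon_Zrest (Zrest_split _ _ fE fe) setUC. Qed.

Lemma sum_dsplit e f (h : {set T} -> R) : e \in E -> f \in E -> e != f ->
  \big[Rplus/R0]_(F in powerset E) h F =
  \big[Rplus/R0]_(G in powerset E | (e \notin G) && (f \notin G))
     (h G + h (e |: G) + h (f |: G) + h (e |: (f |: G))).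
Proof.
move=> eE fE ef; rewrite (sum_split_all _ eE) (@sum_split _ E f (fun G => e \notin G)) //;
  last by move=> G _; rewrite in_setU1 negb_or ef.
by apply: eq_bigr => G _; ring.
Qed.

Lemma wpow_dsplit e f w G : e != f -> e \notin G -> f \notin G ->
  [/\ wpow w (e |: G) = w e * wpow w G, wpow w (f |: G) = w f * wpow w G &
      wpow w (e |: (f |: G)) = w e * w f * wpow w G].
Proof.
move=> ef eG fG; rewrite !wpowU1 ?Rmult_assoc //.
by rewrite in_setU1 negb_or ef.
Qed.

Lemma Zpart_dsplit e f w : e \in E -> f \in E -> e != f ->
  Zpart E mu w = Zrest e f set0 w + w e * Zrest e f [set e] w +
                 w f * Zrest e f [set f] w + w e * w f * Zrest e f [set e; f] w.
Proof.
move=> eE fE ef; rewrite /Zpart (sum_dsplit _ eE fE ef) /Zrest !big_distrr -!big_split /=.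
apply: eq_bigr => G /andP[_ /andP[eG fG]]; have [-> -> ->] := wpow_dsplit w ef eG fG.
by rewrite set0U -setUA; ring.
Qed.

Lemma Zcont_e_dsplit e f w : e \in E -> f \in E -> e != f ->
  Zcont E mu w [set e] = w e * Zrest e f [set e] w + w e * w f * Zrest e f [set e; f] w.
Proof.
move=> eE fE ef; rewrite /Zcont big_mkcondr (sum_dsplit _ eE fE ef) /Zrest.
rewrite !big_distrr -!big_split /=.
apply: eq_bigr => G /andP[_ /andP[eG fG]]; have [-> -> ->] := wpow_dsplit w ef eG fG.
by rewrite !sub1set !in_setU1 eqxx (negbTE eG) (negbTE ef) /= -setUA; ring.
Qed.

Lemma Zcont_f_dsplit e f w : e \in E -> f \in E -> e != f ->
  Zcont E mu w [set f] = w f * Zrest e f [set f] w + w e * w f * Zrest e f [set e; f] w.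
Proof.
move=> eE fE ef; rewrite /Zcont big_mkcondr (sum_dsplit _ eE fE ef) /Zrest.
rewrite !big_distrr -!big_split /=.
apply: eq_bigr => G /andP[_ /andP[eG fG]]; have [-> -> ->] := wpow_dsplit w ef eG fG.
by rewrite !sub1set !in_setU1 eqxx (negbTE fG) eq_sym (negbTE ef) /= -setUA; ring.
Qed.

Lemma Zcont_ef_dsplit e f w : e \in E -> f \in E -> e != f ->
  Zcont E mu w [set e; f] = w e * w f * Zrest e f [set e; f] w.
Proof.
move=> eE fE ef; rewrite /Zcont big_mkcondr (sum_dsplit _ eE fE ef) /Zrest !big_distrr.
apply: eq_bigr => G /andP[_ /andP[eG fG]]; have [-> -> ->] := wpow_dsplit w ef eG fG.
rewrite !subUset !sub1set !in_setU1 !eqxx (negbTE eG) (negbTE fG) eq_sym (negbTE ef) /=.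
by rewrite -setUA; ring.
Qed.

(* Rayleigh in coefficient form: Z = A + a B + b C + a b D with a = w_e, b = w_f. *)
Lemma rayleigh_algebra A B C D a b : 0 < A -> 0 <= B -> 0 <= C -> 0 <= D -> 0 < a -> 0 < b ->
  let Z := A + a * B + b * C + a * b * D in
  a * b * D / Z <= (a * B + a * b * D) / Z * ((b * C + a * b * D) / Z) -> A * D <= B * C.
Proof.
move=> A_gt0 B_ge0 C_ge0 D_ge0 a_gt0 b_gt0 Z ray.
have ab_gt0 := Rmult_lt_0_compat _ _ a_gt0 b_gt0.
have Z_gt0 : 0 < Z.
  have := Rmult_le_pos _ _ (Rlt_le _ _ a_gt0) B_ge0.
  have := Rmult_le_pos _ _ (Rlt_le _ _ b_gt0) C_ge0.
  have := Rmult_le_pos _ _ (Rlt_le _ _ ab_gt0) D_ge0.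
  by rewrite /Z; lra.
have cleared : a * b * D * Z <= (a * B + a * b * D) * (b * C + a * b * D).
  have -> : a * b * D * Z = a * b * D / Z * (Z * Z) by field; lra.
  have -> : (a * B + a * b * D) * (b * C + a * b * D) =
            (a * B + a * b * D) / Z * ((b * C + a * b * D) / Z) * (Z * Z) by field; lra.
  by apply: Rmult_le_compat_r => //; nra.
have : a * b * (A * D - B * C) <= 0 by rewrite /Z in cleared; nra.
by nra.
Qed.

Lemma rayleigh_pos e f w : Rayleigh E mu -> e \in E -> f \in E -> e != f -> pos_weights E w ->
  Zrest e f set0 w * Zrest e f [set e; f] w <= Zrest e f [set e] w * Zrest e f [set f] w.
Proof.
move=> ray eE fE ef w_gt0.
have w_ge0 : nonneg_off e f w by move=> k kE _ _; apply/Rlt_le/w_gt0.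
have := ray w w_gt0 e f eE fE ef; rewrite /Prob (Zcont_ef_dsplit _ eE fE ef).
rewrite (Zcont_e_dsplit _ eE fE ef) (Zcont_f_dsplit _ eE fE ef) (Zpart_dsplit _ eE fE ef).
apply: rayleigh_algebra (w_gt0 e eE) (w_gt0 f fE).
- by apply: Rlt_le_trans (Zrest_ge _ w_ge0); rewrite ?sub0set.
- by apply: Zrest_ge0; rewrite ?sub1set.
- by apply: Zrest_ge0; rewrite ?sub1set.
- by apply: Zrest_ge0; rewrite // subUset !sub1set eE fE.
Qed.

(* The coefficient form of Rayleigh extends to nonnegative weights, by
   approximation with positive ones (the coefficients ignore w_e and w_f). *)
Lemma rayleigh_nonneg e f w : Rayleigh E mu -> e \in E -> f \in E -> e != f ->
  nonneg_off e f w ->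
  Zrest e f set0 w * Zrest e f [set e; f] w <= Zrest e f [set e] w * Zrest e f [set f] w.
Proof.
move=> ray eE fE ef w_ge0.
pose w1 k := if (k == e) || (k == f) then 1 else w k.
have agree : agree_off e f w w1 by move=> k _ ke kf; rewrite /w1 (negbTE ke) (negbTE kf).
rewrite !(Zrest_ext _ agree).
pose wn n k := w1 k + / INR n.+1.
have wn_cv k : k \in E -> Un_cv (fun n => wn n k) (w1 k).
  move=> _; rewrite -[X in Un_cv _ X](Rplus_0_r (w1 k)).
  exact: CV_plus (cv_const _) cv_inv_succ.
have cv S := Zrest_cv e f S wn_cv.
apply: (Rle_cv_lim _ (CV_mult _ _ _ _ (cv _) (cv _)) (CV_mult _ _ _ _ (cv _) (cv _))).
move=> n; apply: rayleigh_pos => // k kE.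
have : 0 < / INR n.+1 by apply/Rinv_0_lt_compat/lt_0_INR; lia.
rewrite /wn /w1; case: ifP => [_|/negbT]; first lra.
by rewrite negb_or => /andP[ke kf]; have := w_ge0 k kE ke kf; lra.
Qed.

Lemma ratio_antitone_algebra A B C D a b : 0 < A -> 0 <= B -> 0 <= C -> 0 <= D ->
  A * D <= B * C -> 0 <= a <= b -> (B + b * D) / (A + b * C) <= (B + a * D) / (A + a * C).
Proof.
move=> A_gt0 B_ge0 C_ge0 D_ge0 AD_BC ab.
have Ca_gt0 : 0 < A + a * C by nra.
have Cb_gt0 : 0 < A + b * C by nra.
apply: (Rmult_le_reg_r ((A + a * C) * (A + b * C))); first nra.
have -> : (B + b * D) / (A + b * C) * ((A + a * C) * (A + b * C)) =
          (B + b * D) * (A + a * C) by field; lra.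
have -> : (B + a * D) / (A + a * C) * ((A + a * C) * (A + b * C)) =
          (B + a * D) * (A + b * C) by field; lra.
nra.
Qed.

Definition upd w f x : T -> R := fun k => if k == f then x else w k.

Lemma cavity_ratio_antitone_coord e f v a b : Rayleigh E mu -> e \in E ->
  nonneg_off e e v -> (f \in E -> f != e -> 0 <= a <= b) ->
  cavity_ratio E mu e (upd v f b) <= cavity_ratio E mu e (upd v f a).
Proof.
move=> ray eE v_ge0 ab.
have [/andP[fE fe]|f_out] := boolP ((f \in E) && (f != e)); last first.
  rewrite (@cavity_ratio_ext e _ (upd v f a)); first exact: Rle_refl.
  move=> k kE ke _; rewrite /upd; case: eqP => // kf.
  by move: f_out; rewrite -kf kE ke.
have v_ge0' : nonneg_off e f v by move=> k kE ke _; apply: v_ge0.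
have agree x : agree_off e f (upd v f x) v by move=> k _ _ kf; rewrite /upd (negbTE kf).
rewrite /cavity_ratio !(Zdel_split _ fE fe) !(Zcon_split _ fE fe) !(Zrest_ext _ (agree _)).
rewrite /upd !eqxx; apply: ratio_antitone_algebra; last exact: ab.
- by apply: Rlt_le_trans (Zrest_ge _ v_ge0'); rewrite ?sub0set.
- by apply: Zrest_ge0; rewrite ?sub1set.
- by apply: Zrest_ge0; rewrite ?sub1set.
- by apply: Zrest_ge0; rewrite // subUset !sub1set eE fE.
- by apply: rayleigh_nonneg; rewrite // eq_sym.
Qed.

(* Changing the weights one coordinate at a time. *)
Lemma cavity_ratio_antitone e w w' : Rayleigh E mu -> e \in E ->
  (forall k, k \in E -> k != e -> 0 <= w k <= w' k) ->
  cavity_ratio E mu e w' <= cavity_ratio E mu e w.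
Proof.
move=> ray eE ww'.
pose mix (s : seq T) k := if k \in s then w' k else w k.
suff mix_le s : cavity_ratio E mu e (mix s) <= cavity_ratio E mu e w.
  by rewrite -(@cavity_ratio_ext e (mix (enum T))) // => k _ _; rewrite /mix mem_enum.
elim: s => [|a s IH]; first exact: Rle_refl.
apply: Rle_trans IH.
have mix_ge0 : nonneg_off e e (mix s).
  by move=> k kE ke _; rewrite /mix; case: ifP; have := ww' k kE ke; lra.
rewrite (@cavity_ratio_ext e _ (upd (mix s) a (w' a))); last first.
  by move=> k _ _ _; rewrite /mix /upd in_cons; case: eqP => [->|].
rewrite [X in _ <= X](@cavity_ratio_ext e _ (upd (mix s) a (mix s a))); last first.
  by move=> k _ _ _; rewrite /upd; case: eqP => [->|].
apply: cavity_ratio_antitone_coord => // aE ae.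
by rewrite /mix; case: ifP; have := ww' a aE ae; lra.
Qed.

Definition avoid_sum e (h : {set T} -> R) w :=
  \big[Rplus/R0]_(G in powerset E | e \notin G) (h G * wpow w G).

Definition Ndel e w := avoid_sum e (fun G => INR #|G| * mu G) w.
Definition Ncon e w := avoid_sum e (fun G => INR #|G| * mu (e |: G)) w.

Lemma avoid_sum_ext e h w w' : agree_off e e w w' -> avoid_sum e h w = avoid_sum e h w'.
Proof.
move=> ww'; apply: eq_bigr => G HG; congr Rmult; apply: wpow_ext => k kG.
by case: (mem_avoiding HG kG) => kE ke; apply: ww'.
Qed.

Lemma INR_cardU1 e G : e \notin G -> INR #|e |: G| = INR #|G| + 1.
Proof. by move=> eG; rewrite cardsU1 eG add1n S_INR. Qed.

Lemma Zpart_single e w : e \in E -> Zpart E mu w = Zdel E mu e w + w e * Zcon E mu e w.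
Proof.
move=> eE; rewrite /Zpart (sum_split_all _ eE) /Zdel /Zcon big_distrr -big_split /=.
by apply: eq_bigr => G /andP[_ eG]; rewrite wpowU1 //; ring.
Qed.

Lemma Zcont_single e w : e \in E -> Zcont E mu w [set e] = w e * Zcon E mu e w.
Proof.
move=> eE; rewrite /Zcont big_mkcondr (sum_split_all _ eE) /Zcon big_distrr /=.
apply: eq_bigr => G /andP[_ eG].
by rewrite !sub1set setU11 (negbTE eG) wpowU1 //; ring.
Qed.

Lemma size_sum_single e w : e \in E ->
  \big[Rplus/R0]_(F in powerset E) (INR #|F| * mu F * wpow w F) =
  Ndel e w + w e * (Ncon e w + Zcon E mu e w).
Proof.
move=> eE; rewrite (sum_split_all _ eE) /Ndel /Ncon /avoid_sum /Zcon.
rewrite -big_split big_distrr -big_split /=; apply: eq_bigr => G /andP[_ eG].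
by rewrite wpowU1 // INR_cardU1 //; ring.
Qed.

Lemma size_sum_e_single e w : e \in E ->
  \big[Rplus/R0]_(F in powerset E | e \in F) (INR #|F| * mu F * wpow w F) =
  w e * (Ncon e w + Zcon E mu e w).
Proof.
move=> eE; rewrite big_mkcondr (sum_split_all _ eE) /Ncon /avoid_sum /Zcon.
rewrite -big_split big_distrr /=; apply: eq_bigr => G /andP[_ eG].
by rewrite setU11 (negbTE eG) wpowU1 // INR_cardU1 //; ring.
Qed.

Lemma size_algebra D C Nd Nc : 0 < D -> 0 <= C ->
  (Nc + C) / (D + C) > (Nd + (Nc + C)) / (D + C) * (C / (D + C)) ->
  Nd * C < (Nc + C) * D.
Proof.
move=> D_gt0 C_ge0 ineq; have Z_gt0 : 0 < D + C by lra.
have cleared : (Nd + (Nc + C)) * C < (Nc + C) * (D + C).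
  have -> : (Nd + (Nc + C)) * C =
            (Nd + (Nc + C)) / (D + C) * (C / (D + C)) * ((D + C) * (D + C)) by field; lra.
  have -> : (Nc + C) * (D + C) = (Nc + C) / (D + C) * ((D + C) * (D + C)) by field; lra.
  by apply: Rmult_lt_compat_r => //; nra.
nra.
Qed.

Lemma size_increasing_single e w : size_increasing E mu -> e \in E -> pos_weights E w ->
  w e = 1 -> Ndel e w * Zcon E mu e w < (Ncon e w + Zcon E mu e w) * Zdel E mu e w.
Proof.
move=> sinc eE w_gt0 we1; have := sinc w w_gt0 e eE.
rewrite /Usize_e /Usize /Prob (size_sum_single _ eE) (size_sum_e_single _ eE).
rewrite (Zcont_single _ eE) (Zpart_single _ eE) we1 !Rmult_1_l.
have w_ge0 : nonneg_off e e w by move=> k kE _ _; apply/Rlt_le/w_gt0.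
by apply: size_algebra; [apply: Zdel_gt0 | apply: Zcon_ge0].
Qed.

(* Along the ray y |-> y w, such sums are polynomials in y. *)
Definition spoly e (c : {set T} -> R) (y : R) :=
  \big[Rplus/R0]_(G in powerset E | e \notin G) (c G * y ^ #|G|).

Definition dspoly e (c : {set T} -> R) (y : R) :=
  \big[Rplus/R0]_(G in powerset E | e \notin G) (c G * (INR #|G| * y ^ #|G|.-1)).

Lemma spoly_derivable e c y : derivable_pt_lim (spoly e c) y (dspoly e c y).
Proof.
apply: (@sum_derivable _ _ _ (fun G y => c G * y ^ #|G|)
                             (fun G y => c G * (INR #|G| * y ^ #|G|.-1))) => G _.
exact: derivable_pt_lim_scal _ _ _ _ (derivable_pt_lim_pow y _).
Qed.

Lemma Zdel_avoid e w : Zdel E mu e w = avoid_sum e mu w.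
Proof. by []. Qed.

Lemma Zcon_avoid e w : Zcon E mu e w = avoid_sum e (fun G => mu (e |: G)) w.
Proof. by []. Qed.

Lemma avoid_sum_scale e h w y :
  avoid_sum e h (fun k => y * w k) = spoly e (fun G => h G * wpow w G) y.
Proof. by apply: eq_bigr => G _; rewrite wpow_scale; ring. Qed.

Lemma avoid_sum_deg_scale e h w y :
  avoid_sum e (fun G => INR #|G| * h G) (fun k => y * w k) =
  y * dspoly e (fun G => h G * wpow w G) y.
Proof.
rewrite /avoid_sum /dspoly big_distrr; apply: eq_bigr => G _; rewrite wpow_scale.
by case: #|G| => [|n] /=; ring.
Qed.

(* The size-increasing inequality at the weights (y w off e, 1 at e), in terms
   of the polynomials P_c(y) = Zcon(y w) and P_d(y) = Zdel(y w). *)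
Lemma size_increasing_ray e w y : size_increasing E mu -> e \in E ->
  (forall k, k \in E -> k != e -> 0 < w k) -> 0 < y ->
  let c G := mu (e |: G) * wpow w G in let d G := mu G * wpow w G in
  y * dspoly e d y * spoly e c y < (y * dspoly e c y + spoly e c y) * spoly e d y.
Proof.
move=> sinc eE w_gt0 y_gt0 c d; pose wy := upd (fun k => y * w k) e 1.
have wy_gt0 : pos_weights E wy.
  move=> k kE; rewrite /wy /upd; case: ifP => [_|/negbT ke]; first lra.
  by have := w_gt0 k kE ke; nra.
have agree : agree_off e e wy (fun k => y * w k).
  by move=> k _ ke _; rewrite /wy /upd (negbTE ke).
have := size_increasing_single sinc eE wy_gt0 ltac:(by rewrite /wy /upd eqxx).
rewrite Zcon_avoid Zdel_avoid /Ncon /Ndel !(avoid_sum_ext _ agree).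
by rewrite !avoid_sum_deg_scale !avoid_sum_scale.
Qed.

(* Hence y |-> y Gamma(y w) = y P_c(y) / P_d(y) has a positive derivative and
   is strictly increasing. *)
Lemma cavity_ratio_scale e w lam : size_increasing E mu -> e \in E ->
  (forall k, k \in E -> k != e -> 0 < w k) -> 1 < lam ->
  cavity_ratio E mu e w < lam * cavity_ratio E mu e (fun k => lam * w k).
Proof.
move=> sinc eE w_gt0 lam_gt1.
pose c G := mu (e |: G) * wpow w G; pose d G := mu G * wpow w G.
have d_gt0 y : 0 < y -> 0 < spoly e d y.
  move=> y_gt0; rewrite -avoid_sum_scale -Zdel_avoid; apply: Zdel_gt0 => k kE ke _.
  by have := w_gt0 k kE ke; nra.
pose phi := ((id * spoly e c) / spoly e d)%F.
have phi_ratio y : 0 < y -> phi y = y * cavity_ratio E mu e (fun k => y * w k).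
  move=> y_gt0; rewrite /phi /cavity_ratio Zcon_avoid Zdel_avoid !avoid_sum_scale.
  by rewrite -/c -/d /mult_fct /div_fct /id /Rdiv; ring.
pose phi' y := ((1 * spoly e c y + y * dspoly e c y) * spoly e d y -
                dspoly e d y * (y * spoly e c y)) / (spoly e d y)².
have phi_der y : 1 <= y <= lam -> derivable_pt_lim phi y (phi' y).
  move=> y_range; apply: derivable_pt_lim_div; last by have := d_gt0 y ltac:(lra); lra.
    exact: derivable_pt_lim_mult (derivable_pt_lim_id y) (spoly_derivable e c y).
  exact: spoly_derivable.
have phi'_gt0 y : 0 < y -> 0 < phi' y.
  move=> y_gt0; apply: Rdiv_lt_0_compat; last exact/Rsqr_pos_lt/Rgt_not_eq/d_gt0.
  by have := size_increasing_ray sinc eE w_gt0 y_gt0; rewrite /= -/c -/d; nra.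
have [y [phi_diff y_range]] := MVT_cor2 _ _ _ _ lam_gt1 phi_der.
have : phi 1 < phi lam by have := phi'_gt0 y ltac:(lra); nra.
rewrite !phi_ratio ?Rmult_1_l; try lra.
by rewrite (@cavity_ratio_ext e w (fun k => 1 * w k)) // => k _ _ _; ring.
Qed.

Lemma Zcon_zero e : Zcon E mu e (fun _ => 0) = mu [set e].
Proof.
rewrite /Zcon (bigD1 set0) /=; last by rewrite powersetE sub0set in_set0.
rewrite wpow0 setU0 big1 => [|G /andP[_ G0]]; first ring.
by rewrite wpow_zero // Rmult_0_r.
Qed.

Lemma Ncon_le e w : e \in E -> nonneg_off e e w -> Ncon e w <= INR #|T| * Zcon E mu e w.
Proof.
move=> eE w_ge0; rewrite /Ncon /avoid_sum /Zcon big_distrr; apply: sum_le => G HG /=.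
have mu_ge0' : 0 <= mu (e |: G).
  by apply: mu_ge0; case/andP: HG; rewrite powersetE subUset sub1set eE => ->.
have wG_ge0 : 0 <= wpow w G.
  by apply: wpow_ge0 => k kG; case: (mem_avoiding HG kG) => kE ke; apply: w_ge0.
have : INR #|G| <= INR #|T| by apply/le_INR/leP/max_card.
by move=> GT; rewrite Rmult_assoc; apply: Rmult_le_compat_r => //; apply: Rmult_le_pos.
Qed.

(* A cavity-monotone measure charges every singleton: otherwise Gamma_e would
   vanish identically, contradicting the size-increasing property. *)
Lemma mu_single_gt0 e : Rayleigh E mu -> size_increasing E mu -> e \in E -> 0 < mu [set e].
Proof.
move=> ray sinc eE; have mu1_ge0 : 0 <= mu [set e] by apply: mu_ge0; rewrite sub1set.
apply: Rnot_le_lt => mu1_le0.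
pose one (k : T) := 1.
have one_ge0 : nonneg_off e e one by move=> *; rewrite /one; lra.
have Zdel_gt0' := Zdel_gt0 one_ge0.
have Zcon0 : Zcon E mu e one = 0.
  have := @cavity_ratio_antitone e (fun _ => 0) one ray eE ltac:(by move=> *; rewrite /one; lra).
  have mu1_0 : mu [set e] = 0 by lra.
  rewrite /cavity_ratio Zcon_zero mu1_0 Rdiv_0_l.
  move=> ratio_le; apply: Rle_antisym; last exact: Zcon_ge0.
  have := Rinv_0_lt_compat _ Zdel_gt0'; rewrite /Rdiv in ratio_le; nra.
have one_gt0 : pos_weights E one by move=> *; rewrite /one; lra.
have := size_increasing_single sinc eE one_gt0 erefl.
have := Ncon_le eE one_ge0; rewrite Zcon0; nra.
Qed.

Lemma cavity_ratio_gt0 e w : Rayleigh E mu -> size_increasing E mu -> e \in E ->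
  nonneg_off e e w -> 0 < cavity_ratio E mu e w.
Proof.
move=> ray sinc eE w_ge0; apply: Rdiv_lt_0_compat; last exact: Zdel_gt0.
exact: Rlt_le_trans (mu_single_gt0 ray sinc eE) (Zcon_ge eE w_ge0).
Qed.
End Measure.

Unset Implicit Arguments.

Section Network.
Variables (V : finType) (adj : rel V) (mu : V -> {set V} -> R) (t : R).
Hypothesis net : cavity_monotone_network adj mu.
Hypothesis t_gt0 : 0 < t.

Local Notation Fop := (scaled_cavity_op adj mu t).

Definition cfg_le (x y : V -> V -> R) := forall i j, adj i j -> x i j <= y i j.

Lemma adj_sym {i j} : adj i j -> adj j i.
Proof. by case: net => [[[adjC _] _] _]; rewrite adjC. Qed.

Lemma mem_nbhd i k : (k \in nbhd adj i) = adj i k.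
Proof. by rewrite /nbhd in_set. Qed.

Lemma local_measure i : is_measure (nbhd adj i) (mu i).
Proof. by case: net => [[_ meas] _]. Qed.

Lemma local_cavity_monotone i : cavity_monotone (nbhd adj i) (mu i).
Proof. by case: net. Qed.

Lemma local_mu0 i : 0 < mu i set0.
Proof. by case: (local_cavity_monotone i). Qed.

(* Vertex i sees the incoming messages x_{k -> i} as its weights. *)
Lemma incoming_nonneg x i j : nonneg_config adj x ->
  nonneg_off (nbhd adj i) j j (fun k => x k i).
Proof. by move=> x_ge0 k; rewrite mem_nbhd => ik _ _; apply/x_ge0/adj_sym. Qed.

Lemma Fop_ext x y i j : (forall a b, adj a b -> x a b = y a b) -> Fop x i j = Fop y i j.
Proof.
move=> xy; rewrite /scaled_cavity_op /cavity_op; congr Rmult.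
by apply: cavity_ratio_ext => k; rewrite mem_nbhd => ik _ _; apply/xy/adj_sym.
Qed.

Lemma Fop_gt0 x i j : nonneg_config adj x -> adj i j -> 0 < Fop x i j.
Proof.
move=> x_ge0 ij; have [_ [ray sinc]] := local_cavity_monotone i.
rewrite /scaled_cavity_op /cavity_op; apply: Rmult_lt_0_compat => //.
apply: (cavity_ratio_gt0 (local_measure i) (local_mu0 i) ray sinc); first by rewrite mem_nbhd.
exact: incoming_nonneg.
Qed.

Lemma Fop_nonneg x : nonneg_config adj x -> nonneg_config adj (Fop x).
Proof. by move=> x_ge0 i j ij; apply/Rlt_le/Fop_gt0. Qed.

Lemma Fop_antitone x y : nonneg_config adj x -> cfg_le x y -> cfg_le (Fop y) (Fop x).
Proof.
move=> x_ge0 xy i j ij; have [_ [ray _]] := local_cavity_monotone i.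
rewrite /scaled_cavity_op /cavity_op; apply: Rmult_le_compat_l; first lra.
apply: (cavity_ratio_antitone (local_measure i) (local_mu0 i) ray); first by rewrite mem_nbhd.
by move=> k; rewrite mem_nbhd => ik _; have ki := adj_sym ik; split; [apply: x_ge0 | apply: xy].
Qed.

Lemma Fop_cv (xn : nat -> V -> V -> R) x : nonneg_config adj x ->
  (forall a b, adj a b -> Un_cv (fun n => xn n a b) (x a b)) ->
  forall i j, adj i j -> Un_cv (fun n => Fop (xn n) i j) (Fop x i j).
Proof.
move=> x_ge0 x_cv i j ij; apply: CV_mult; first exact: cv_const.
apply: (cavity_ratio_cv (local_measure i) (local_mu0 i)); first exact: incoming_nonneg.
by move=> k; rewrite mem_nbhd => ik; apply/x_cv/adj_sym.
Qed.

Lemma Fop_subhomogeneous x lam : (forall a b, adj a b -> 0 < x a b) -> 1 < lam ->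
  forall i j, adj i j -> Fop x i j < lam * Fop (fun a b => lam * x a b) i j.
Proof.
move=> x_gt0 lam_gt1 i j ij; have [_ [_ sinc]] := local_cavity_monotone i.
have := cavity_ratio_scale (local_measure i) (local_mu0 i) (w := fun k => x k i) sinc
          (e := j) ltac:(by rewrite mem_nbhd) _ lam_gt1.
have x_gt0' k : k \in nbhd adj i -> k != j -> 0 < x k i.
  by rewrite mem_nbhd => ik _; apply/x_gt0/adj_sym.
by move/(_ x_gt0') => ratio_lt; rewrite /scaled_cavity_op /cavity_op; nra.
Qed.

Lemma iter_nonneg x0 n : nonneg_config adj x0 -> nonneg_config adj (iter n Fop x0).
Proof. by move=> x0_ge0; elim: n => [|n IH] //=; apply: Fop_nonneg. Qed.

Lemma Fop2_monotone x y : nonneg_config adj x -> cfg_le x y ->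
  cfg_le (Fop (Fop x)) (Fop (Fop y)).
Proof.
move=> x_ge0 xy; apply: Fop_antitone; last exact: Fop_antitone.
by apply: Fop_nonneg => i j ij; apply: Rle_trans (x_ge0 i j ij) (xy i j ij).
Qed.

Definition orbit0 n : V -> V -> R := iter n Fop (fun _ _ => 0).

Lemma orbit0_nonneg n : nonneg_config adj (orbit0 n).
Proof. by apply: iter_nonneg => i j _; apply: Rle_refl. Qed.

Lemma orbit0_shift2 m n : cfg_le (orbit0 m) (orbit0 n) ->
  cfg_le (orbit0 m.+2) (orbit0 n.+2).
Proof. exact/Fop2_monotone/orbit0_nonneg. Qed.

Lemma orbit0_even_incr n : cfg_le (orbit0 n.*2) (orbit0 n.+1.*2).
Proof.
elim: n => [|n IH]; last by rewrite doubleS; apply: orbit0_shift2.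
exact: (orbit0_nonneg 2).
Qed.

Lemma orbit0_odd_decr n : cfg_le (orbit0 n.+1.*2.+1) (orbit0 n.*2.+1).
Proof.
elim: n => [|n IH]; last by rewrite doubleS; apply: orbit0_shift2.
apply: Fop_antitone => [i j _|]; first exact: Rle_refl.
exact: (orbit0_nonneg 2).
Qed.

Lemma orbit0_even_le_odd n : cfg_le (orbit0 n.*2) (orbit0 n.*2.+1).
Proof.
elim: n => [|n IH]; last by rewrite doubleS; apply: orbit0_shift2.
exact: (orbit0_nonneg 1).
Qed.

Lemma orbit0_odd_le_first n : cfg_le (orbit0 n.*2.+1) (orbit0 1).
Proof.
elim: n => [i j _|n IH i j ij]; first exact: Rle_refl.
exact: Rle_trans (orbit0_odd_decr n i j ij) (IH i j ij).
Qed.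

(* Monotone and bounded, the even and odd subsequences converge. *)
Lemma orbit0_limits : exists l u : V -> V -> R, forall i j, adj i j ->
  Un_cv (fun n => orbit0 n.*2 i j) (l i j) /\ Un_cv (fun n => orbit0 n.*2.+1 i j) (u i j).
Proof.
pose lims (p : V * V) (lu : R * R) := adj p.1 p.2 ->
  Un_cv (fun n => orbit0 n.*2 p.1 p.2) lu.1 /\ Un_cv (fun n => orbit0 n.*2.+1 p.1 p.2) lu.2.
suff [f f_lims] : exists f, forall p, lims p (f p).
  by exists (fun i j => (f (i, j)).1), (fun i j => (f (i, j)).2) => i j; apply: (f_lims (i, j)).
apply: choice => [[i j]]; rewrite /lims /=.
case: (boolP (adj i j)) => ij; last by exists (0, 0).
have even_ub : has_ub (fun n => orbit0 n.*2 i j).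
  exists (orbit0 1 i j) => x [n ->].
  exact: Rle_trans (orbit0_even_le_odd n i j ij) (orbit0_odd_le_first n i j ij).
have odd_lb : has_lb (fun n => orbit0 n.*2.+1 i j).
  by exists 0 => x [n ->]; rewrite /opp_seq; have := orbit0_nonneg n.*2.+1 i j ij; lra.
have [l l_cv] := growing_cv _ (fun n => orbit0_even_incr n i j ij) even_ub.
have [u u_cv] := decreasing_cv _ (fun n => orbit0_odd_decr n i j ij) odd_lb.
by exists (l, u).
Qed.

Definition between (a b y : V -> V -> R) :=
  (cfg_le a y /\ cfg_le y b) \/ (cfg_le b y /\ cfg_le y a).

Lemma Fop_between a b y : nonneg_config adj a -> nonneg_config adj b ->
  nonneg_config adj y -> between a b y -> between (Fop a) (Fop b) (Fop y).
Proof.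
move=> a_ge0 b_ge0 y_ge0 [[a_y y_b]|[b_y y_a]].
  by right; split; apply: Fop_antitone.
by left; split; apply: Fop_antitone.
Qed.

Lemma orbit_between x0 n : nonneg_config adj x0 ->
  between (orbit0 n) (orbit0 n.+1) (iter n.+1 Fop x0).
Proof.
move=> x0_ge0; elim: n => [|n IH].
  left; split; first exact: Fop_nonneg.
  by apply: Fop_antitone => // i j _; apply: Rle_refl.
rewrite iterS; apply: (Fop_between (orbit0 n) (orbit0 n.+1)) => //;
  by [apply: orbit0_nonneg | apply: iter_nonneg].
Qed.

Section Limits.
Variables l u : V -> V -> R.
Hypothesis lu_cv : forall i j, adj i j ->
  Un_cv (fun n => orbit0 n.*2 i j) (l i j) /\ Un_cv (fun n => orbit0 n.*2.+1 i j) (u i j).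

Lemma l_cv {i j} : adj i j -> Un_cv (fun n => orbit0 n.*2 i j) (l i j).
Proof. by case/lu_cv. Qed.

Lemma u_cv {i j} : adj i j -> Un_cv (fun n => orbit0 n.*2.+1 i j) (u i j).
Proof. by case/lu_cv. Qed.

Lemma l_gt0 {i j} : adj i j -> 0 < l i j.
Proof.
move=> ij; apply: Rlt_le_trans (Fop_gt0 _ _ _ (orbit0_nonneg 1) ij) _.
exact: (growing_ineq _ _ (fun n => orbit0_even_incr n i j ij) (l_cv ij) 1).
Qed.

Lemma l_nonneg : nonneg_config adj l.
Proof. by move=> i j ij; apply/Rlt_le/l_gt0. Qed.

Lemma l_le_u : cfg_le l u.
Proof.
move=> i j ij; apply: (Rle_cv_lim _ (l_cv ij) (u_cv ij)) => n.
exact: orbit0_even_le_odd.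
Qed.

Lemma u_nonneg : nonneg_config adj u.
Proof. by move=> i j ij; apply: Rle_trans (l_nonneg i j ij) (l_le_u i j ij). Qed.

Lemma u_fixed {i j} : adj i j -> u i j = Fop l i j.
Proof.
move=> ij; apply: UL_sequence (u_cv ij) _.
exact: Fop_cv l_nonneg (fun a b ab => l_cv ab) i j ij.
Qed.

Lemma l_fixed {i j} : adj i j -> l i j = Fop u i j.
Proof.
move=> ij; apply: UL_sequence (cv_succ (l_cv ij)) _.
apply: (Un_cv_ext (fun n => Fop (orbit0 n.*2.+1) i j)) => [n|]; first by rewrite doubleS.
exact: Fop_cv u_nonneg (fun a b ab => u_cv ab) i j ij.
Qed.

(* With lam the largest ratio u/l, lam > 1 would contradict the strict
   subhomogeneity of F:  u = F l < lam F(lam l) <= lam F u = lam l. *)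
Lemma u_le_l {i j} : adj i j -> u i j <= l i j.
Proof.
move=> ij; apply: Rnot_lt_le => l_lt_u.
pose r (p : V * V) := u p.1 p.2 / l p.1 p.2.
pose edges := [seq p <- enum (@predT (V * V)) | adj p.1 p.2].
have edgeP p : (p \in edges) = adj p.1 p.2 by rewrite mem_filter mem_enum andbT.
have [[a b] ab_edge r_max] := @seq_argmax _ edges r (i, j) ltac:(by rewrite edgeP).
have ab : adj a b by move: ab_edge; rewrite edgeP.
pose lam := r (a, b).
have lam_gt1 : 1 < lam.
  have := r_max (i, j) ltac:(by rewrite edgeP); rewrite /lam /r /=.
  have := l_gt0 ij => l_gt0' r_le.
  suff : 1 < u i j / l i j by lra.
  by apply: (Rmult_lt_reg_r (l i j)) => //; rewrite Rmult_1_l /Rdiv Rmult_assoc Rinv_l; lra.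
have u_le : cfg_le u (fun a b => lam * l a b).
  move=> a' b' ab'; have := r_max (a', b') ltac:(by rewrite edgeP); rewrite /r /= => r_le.
  have := l_gt0 ab' => l_gt0'.
  have -> : u a' b' = u a' b' / l a' b' * l a' b' by field; lra.
  by rewrite /lam /r /=; apply: Rmult_le_compat_r; lra.
have F_le := Fop_antitone u (fun a b => lam * l a b) u_nonneg u_le a b ab.
have F_lt := Fop_subhomogeneous l lam (fun a b ab => l_gt0 ab) lam_gt1 a b ab.
rewrite -(l_fixed ab) in F_le; rewrite -(u_fixed ab) in F_lt.
have : lam * l a b = u a b by rewrite /lam /r /=; field; have := l_gt0 ab; lra.
by nra.
Qed.

Lemma u_eq_l i j : adj i j -> u i j = l i j.
Proof. by move=> ij; apply: Rle_antisym (u_le_l ij) (l_le_u i j ij). Qed.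

Lemma l_fixed_point i j : adj i j -> l i j = Fop l i j.
Proof. by move=> ij; rewrite (l_fixed ij); apply: Fop_ext => a b ab; apply: u_eq_l. Qed.

Lemma orbit0_cv i j : adj i j -> Un_cv (fun n => orbit0 n i j) (l i j).
Proof. by move=> ij; apply: cv_interleave (l_cv ij) _; rewrite -(u_eq_l i j ij); apply: u_cv. Qed.

Lemma orbit_cv x0 : nonneg_config adj x0 ->
  forall i j, adj i j -> Un_cv (fun n => iter n Fop x0 i j) (l i j).
Proof.
move=> x0_ge0 i j ij; apply: cv_of_succ.
apply: (cv_between (orbit0_cv i j ij) (cv_succ (orbit0_cv i j ij))) => n.
have [[lo hi]|[lo hi]] := orbit_between x0 n x0_ge0; [left | right].
  by split; [apply: lo | apply: hi].
by split; [apply: lo | apply: hi].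
Qed.

(* Uniqueness: a nonnegative fixed point is its own orbit, hence equals l. *)
Lemma fixed_point_unique y : nonneg_config adj y ->
  (forall i j, adj i j -> y i j = Fop y i j) -> forall i j, adj i j -> y i j = l i j.
Proof.
move=> y_ge0 y_fixed i j ij; apply: UL_sequence (cv_const (y i j)) _.
apply: (Un_cv_ext (fun n => iter n Fop y i j)) => [n|]; last exact: orbit_cv.
elim: n i j ij => [//|n IH] i j ij; rewrite iterS (y_fixed i j ij).
by apply: Fop_ext => a b ab; apply: IH.
Qed.
End Limits.
End Network.

Theorem mainTheorem4 (V : finType) (adj : rel V) (mu : V -> {set V} -> R) (t : R) :
  cavity_monotone_network adj mu -> 0 < t ->
  exists x : V -> V -> R,
    nonneg_config adj x /\
    (forall i j, adj i j -> x i j = scaled_cavity_op adj mu t x i j) /\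
    (forall y : V -> V -> R, nonneg_config adj y ->
       (forall i j, adj i j -> y i j = scaled_cavity_op adj mu t y i j) ->
       forall i j, adj i j -> y i j = x i j) /\
    (forall x0 : V -> V -> R, nonneg_config adj x0 ->
       forall i j, adj i j ->
         Un_cv (fun k => iter k (scaled_cavity_op adj mu t) x0 i j) (x i j)).
Proof.
move=> net t_gt0.
have [l [u lu_cv]] := orbit0_limits V adj mu t net t_gt0.
exists l; split; first exact: l_nonneg lu_cv.
split; first exact: l_fixed_point net t_gt0 l u lu_cv.
split; first exact: fixed_point_unique net t_gt0 l u lu_cv.
exact: orbit_cv net t_gt0 l u lu_cv.
Qed.
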